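(* Let $s,t,k$ be non-negative integers with $t \le A(s,2k-2,k)$. For every family $\mathscr{F}$ of $t$ graphs, each having $n$ vertices and being $p$-almost equitably $k$-colorable, \[ \mathscr{U}(\mathscr{F}) ~\le~ s\left\lceil \frac{n-p}{k}\right\rceil + tp . \]
   Context: All graphs are finite and simple. A graph $U$ is an induced-universal graph for a family $\mathscr{F}$ if every graph of $\mathscr{F}$ is isomorphic to an induced subgraph of $U$; $\mathscr{U}(\mathscr{F})$ is the smallest number of vertices of such a $U$. A $k$-coloring is equitable if its $k$ color classes (stable sets) have sizes pairwise differing by at most one; a graph $G$ is $p$-almost equitably $k$-colorable if there is a set $X$ of at most $p$ vertices such that $G\setminus X$ has an equitable $k$-coloring. $A(n,d,w)$ denotes the maximum number of binary words of length $n$ and Hamming weight $w$ that are pairwise at Hamming distance at least $d$; equivalently $A(n,2k-2,k)$ is the maximum number of pairwise edge-disjoint copies of $K_k$ in $K_n$. *)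

From mathcomp Require Import all_boot.
Set Implicit Arguments. Unset Strict Implicit. Unset Printing Implicit Defensive.

Definition simple_graph (V : finType) (e : rel V) : Prop :=
  (forall x, ~~ e x x) /\ (forall x y, e x y = e y x).

Definition induced_sub (V W : finType) (g : rel V) (u : rel W) : Prop :=
  exists f : V -> W, injective f /\ forall x y, g x y = u (f x) (f y).

Definition stable (V : finType) (g : rel V) (S : {set V}) : Prop :=
  forall x y, x \in S -> y \in S -> ~~ g x y.

Definition equitable_coloring_on (V : finType) (g : rel V) (D : {set V}) (k : nat)
    (P : 'I_k -> {set V}) : Prop :=
  [/\ forall i, P i \subset D,
      forall v, v \in D -> exists i, v \in P i,
      forall i j, i != j -> [disjoint P i & P j],
      forall i, stable g (P i)
    & forall i j, #|P i| <= #|P j| + 1].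

Definition almost_equitably_colorable (V : finType) (g : rel V) (p k : nat) : Prop :=
  exists X : {set V}, #|X| <= p /\
    exists P : 'I_k -> {set V}, equitable_coloring_on g (~: X) P.

Definition hweight (n : nat) (u : {ffun 'I_n -> bool}) : nat := #|[set i | u i]|.
Definition hdist (n : nat) (u v : {ffun 'I_n -> bool}) : nat :=
  #|[set i | u i != v i]|.

Definition cw_code (n d w : nat) (C : {set {ffun 'I_n -> bool}}) : bool :=
  [forall u : {ffun 'I_n -> bool}, (u \in C) ==> (hweight u == w)] &&
  [forall u : {ffun 'I_n -> bool}, forall v : {ffun 'I_n -> bool}, [&& u \in C, v \in C & u != v] ==> (d <= hdist u v)].

Definition A (n d w : nat) : nat :=
  \max_(C : {set {ffun 'I_n -> bool}} | @cw_code n d w C) #|C|.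

Definition induced_universal (t n m : nat) (F : 'I_t -> rel 'I_n) (U : rel 'I_m) : Prop :=
  simple_graph U /\ forall i, induced_sub (F i) U.

From mathcomp Require Import all_boot zify.
Set Implicit Arguments. Unset Strict Implicit. Unset Printing Implicit Defensive.

(* Let c = ceil((n - p) / k). The universal graph has s columns of height c and,
   for each of the t graphs, a private block of p vertices. Graph i gets a
   codeword w_i of length s and weight k; its k colour classes, truncated to
   height c, are put into the k columns of the support of w_i, and the at most p
   remaining vertices into its private block. U is the union of the embedded
   graphs. As d(w_i, w_j) >= 2k - 2, two supports share at most one column, so two
   different graphs only meet in pairs of vertices of a single column, which are
   non-adjacent in both (colour classes are stable); hence each graph stays
   induced in U. *)

Lemma card_set_sum (T : finType) (P : pred T) : #|[set x | P x]| = \sum_x P x.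
Proof. by rewrite -sum1_card big_mkcond; apply: eq_bigr => x _; rewrite inE; case: (P x). Qed.

Lemma hdist_add_common s (u v : {ffun 'I_s -> bool}) :
  hdist u v + 2 * #|[set i | u i && v i]| = hweight u + hweight v.
Proof.
rewrite /hdist /hweight !card_set_sum big_distrr -!big_split /=.
by apply: eq_bigr => i _; case: (u i); case: (v i).
Qed.

Lemma cw_common_support s k (u v : {ffun 'I_s -> bool}) (j j' : 'I_s) :
  hweight u = k -> hweight v = k -> 2 * k - 2 <= hdist u v ->
  u j -> v j -> u j' -> v j' -> j = j'.
Proof.
move=> wu wv duv uj vj uj' vj'; apply/eqP/negPn/negP => neq.
have : #|[set j; j']| <= #|[set i | u i && v i]|.
  by apply/subset_leq_card/subsetP => i; rewrite !inE => /orP[] /eqP->; apply/andP.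
have := hdist_add_common u v; rewrite cards2 neq; lia.
Qed.

Lemma cw_code_family s d w t : t <= A s d w ->
  exists c : 'I_t -> {ffun 'I_s -> bool},
    (forall i, hweight (c i) = w) /\ (forall i i', i != i' -> d <= hdist (c i) (c i')).
Proof.
have : 0 < #|[pred C | @cw_code s d w C]|.
  apply/card_gt0P; exists set0; rewrite inE /cw_code.
  by apply/andP; split; apply/forallP => u; [|apply/forallP => v]; rewrite inE.
case/(eq_bigmax_cond (fun C : {set {ffun 'I_s -> bool}} => #|C|)) => C + AC tA.
rewrite inE => /andP[/forallP Cw /forallP Cd].
have tC : t <= #|C| by rewrite -AC.
pose c i := enum_val (widen_ord tC i).
have c_inj : injective c by move=> i i' /enum_val_inj /(congr1 val) /= ii'; apply: val_inj.
exists c; split=> [i | i i' neq].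
  by apply/eqP; have /implyP := Cw (c i); apply; apply: enum_valP.
have /forallP/(_ (c i'))/implyP := Cd (c i); apply.
by rewrite !enum_valP (inj_eq c_inj).
Qed.

Lemma support_enum s k (u : {ffun 'I_s -> bool}) : hweight u = k ->
  exists sig : 'I_k -> 'I_s, injective sig /\ forall l, u (sig l).
Proof.
move=> wu; pose sig l := enum_val (cast_ord (esym wu) l).
exists sig; split=> [l l' /enum_val_inj /cast_ord_inj // | l].
by have := enum_valP (cast_ord (esym wu) l); rewrite inE.
Qed.

Definition prefix (T : finType) (A : {set T}) (c : nat) : {set T} :=
  [set x in take c (enum A)].

Lemma mem_prefix (T : finType) (A : {set T}) c x :
  (x \in prefix A c) = (x \in A) && (index x (enum A) < c).
Proof.
rewrite inE; have [Ax | nAx] := boolP (x \in A); first by rewrite in_take ?mem_enum.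
by apply/negbTE; apply: contra nAx => /mem_take; rewrite mem_enum.
Qed.

Lemma prefix_sub (T : finType) (A : {set T}) c : prefix A c \subset A.
Proof. by apply/subsetP => x; rewrite mem_prefix => /andP[]. Qed.

Lemma card_prefix (T : finType) (A : {set T}) c : #|prefix A c| = minn c #|A|.
Proof.
by rewrite cardsE (card_uniqP _) ?take_uniq ?enum_uniq // size_take_min -cardE.
Qed.

Lemma card_bigcup_disjoint (I T : finType) (F : I -> {set T}) :
  (forall i j, i != j -> [disjoint F i & F j]) -> #|\bigcup_i F i| = \sum_i #|F i|.
Proof.
move=> disjF; rewrite -sum1_card partition_disjoint_bigcup //.
by under eq_bigr do rewrite sum1_card.
Qed.

Section EquitableTruncation.

Variables (V : finType) (k c p : nat) (X : {set V}) (P : 'I_k -> {set V}).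
Hypothesis cardX : #|X| <= p.
Hypothesis P_cover : forall v, v \in ~: X -> exists l, v \in P l.
Hypothesis P_disjoint : forall l l', l != l' -> [disjoint P l & P l'].
Hypothesis P_equitable : forall l l', #|P l| <= #|P l'| + 1.
Hypothesis c_ceil : c = (#|V| - p + (k - 1)) %/ k.

Let bulk := \bigcup_l prefix (P l) c.

(* Either every class fits in height c, so only X is left out, or by equitability
   every class has at least c vertices and the k columns hold kc >= |V| - p. *)
Lemma card_bulk : #|V| - p <= #|bulk|.
Proof.
have cardCX : #|V| - p <= #|~: X| by have := cardsC X; lia.
have [small | /forallPn[l0]] := boolP [forall l, #|P l| <= c].
  apply: leq_trans cardCX (subset_leq_card _); apply/subsetP => x /P_cover[l xl].
  apply/bigcupP; exists l => //; rewrite mem_prefix xl.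
  by apply: leq_trans (forallP small l); rewrite cardE index_mem mem_enum.
rewrite -ltnNge => big_l0.
have c_le l : c <= #|P l| by have := P_equitable l0 l; lia.
have k_gt0 : 0 < k := leq_ltn_trans (leq0n l0) (ltn_ord l0).
rewrite card_bigcup_disjoint; last first.
  by move=> l l' /P_disjoint; apply: disjointW; apply: prefix_sub.
under eq_bigr do rewrite card_prefix (minn_idPl (c_le _)).
by rewrite sum_nat_const card_ord c_ceil; lia.
Qed.

Lemma equitable_embedding : exists e : V -> ('I_k * 'I_c) + 'I_p,
  injective e /\ forall x l q, e x = inl (l, q) -> x \in P l.
Proof.
pose rank_of x (b : ('I_k * 'I_c) + 'I_p) := match b with
  | inl (l, q) => (x \in P l) && (index x (enum (P l)) == q)
  | inr r => (x \in ~: bulk) && (index x (enum (~: bulk)) == r) end.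
have rank_ex x : exists b, rank_of x b.
  have [/bigcupP[l _] | xR] := boolP (x \in bulk).
    rewrite mem_prefix => /andP[xl lt_c].
    by exists (inl (l, Ordinal lt_c)); rewrite /= xl eqxx.
  have lt_R : index x (enum (~: bulk)) < #|~: bulk|.
    by rewrite cardE index_mem mem_enum inE.
  have R_p : #|~: bulk| <= p by have := cardsC bulk; have := card_bulk; lia.
  by exists (inr (Ordinal (leq_trans lt_R R_p))); rewrite /= inE xR eqxx.
have rank_inj x y b : rank_of x b -> rank_of y b -> x = y.
  case: b => [[l q]|r] /andP[xA /eqP ix] /andP[yA /eqP iy].
    by apply: (index_inj x (s := enum (P l))); rewrite ?mem_enum ?ix ?iy.
  by apply: (index_inj x (s := enum (~: bulk))); rewrite ?mem_enum ?ix ?iy.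
have [e e_rank] := fin_all_exists rank_ex.
exists e; split=> [x y exy | x l q exq].
  by apply: (rank_inj _ _ (e x)); rewrite // exy.
by have := e_rank x; rewrite exq => /andP[].
Qed.

End EquitableTruncation.

Definition column_placement (V I : finType) (s c p : nat) (g : rel V)
    (u : {ffun 'I_s -> bool}) (i : I) (f : V -> ('I_s * 'I_c) + (I * 'I_p)) : Prop :=
  [/\ injective f,
      forall x j q, f x = inl (j, q) -> u j,
      forall x i' r, f x = inr (i', r) -> i' = i
    & forall x y j q q', f x = inl (j, q) -> f y = inl (j, q') -> ~~ g x y].

Lemma column_placement_exists (V I : finType) s k c p (g : rel V)
    (u : {ffun 'I_s -> bool}) (i : I) :
  c = (#|V| - p + (k - 1)) %/ k -> hweight u = k -> almost_equitably_colorable g p k ->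
  exists f, @column_placement V I s c p g u i f.
Proof.
move=> c_ceil wu [X [cardX [P [_ P_cover P_disjoint P_stable P_equitable]]]].
have [e [e_inj e_class]] :=
  equitable_embedding cardX P_cover P_disjoint P_equitable c_ceil.
have [sig [sig_inj sig_supp]] := support_enum wu.
pose place (z : ('I_k * 'I_c) + 'I_p) : ('I_s * 'I_c) + (I * 'I_p) :=
  match z with inl (l, q) => inl (sig l, q) | inr r => inr (i, r) end.
have place_inj : injective place.
  by case=> [[l q]|r] [[l' q']|r'] //= [] => [/sig_inj-> ->|->].
exists (place \o e); split=> [|x j q|x i' r|x y j q q'] /=.
- exact: inj_comp place_inj e_inj.
- by case: (e x) => [[l q0]|r] //= [<- _].
- by case: (e x) => [[l q0]|r0] //= [<-].
- case ex: (e x) => [[l q0]|r] //= [jl _]; case ey: (e y) => [[l' q1]|r] //= [jl' _].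
  have ll' : l' = l by apply: sig_inj; rewrite jl jl'.
  by rewrite ll' in ey; apply: P_stable (e_class _ _ _ ex) (e_class _ _ _ ey).
Qed.

Lemma column_placements_coherent (V I : finType) s k c p (F : I -> rel V)
    (w : I -> {ffun 'I_s -> bool}) (f : I -> V -> ('I_s * 'I_c) + (I * 'I_p)) :
  (forall i, hweight (w i) = k) ->
  (forall i i', i != i' -> 2 * k - 2 <= hdist (w i) (w i')) ->
  (forall i, column_placement (F i) (w i) i (f i)) ->
  forall i j x y x' y', f i x = f j x' -> f i y = f j y' -> F j x' y' -> F i x y.
Proof.
move=> w_weight w_dist f_place i j x y x' y'.
have [<- | neq] := eqVneq i j.
  by have [f_inj _ _ _] := f_place i; move=> /f_inj-> /f_inj->.
have [_ supp_i priv_i _] := f_place i; have [_ supp_j priv_j stab_j] := f_place j.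
have private_ne z i0 r : f i z = inr (i0, r) -> forall z', f j z' <> inr (i0, r).
  by move=> /priv_i-> z' /priv_j ij; rewrite ij eqxx in neq.
case fx: (f i x) => [[a q]|[i0 r]] fx'.
  2: by case: (private_ne _ _ _ fx x' (esym fx')).
case fy: (f i y) => [[b q']|[i0 r]] fy'.
  2: by case: (private_ne _ _ _ fy y' (esym fy')).
have ab : a = b.
  apply: (cw_common_support (w_weight i) (w_weight j) (w_dist _ _ neq));
    by [apply: supp_i fx | apply: supp_j (esym fx')
       | apply: supp_i fy | apply: supp_j (esym fy')].
by rewrite ab in fx'; rewrite (negbTE (stab_j _ _ _ _ _ (esym fx') (esym fy'))).
Qed.

Section UnionGraph.

Variables (I V B : finType) (F : I -> rel V) (f : I -> V -> B).

Definition union_graph : rel B := fun a b =>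
  [exists i, exists x, exists y, [&& f i x == a, f i y == b & F i x y]].

Hypothesis F_simple : forall i, simple_graph (F i).
Hypothesis f_coherent :
  forall i j x y x' y', f i x = f j x' -> f i y = f j y' -> F j x' y' -> F i x y.

Lemma union_graphE i x y : union_graph (f i x) (f i y) = F i x y.
Proof.
apply/existsP/idP => [[j /existsP[x' /existsP[y' /and3P[/eqP fx /eqP fy]]]] | Fxy].
  exact: f_coherent (esym fx) (esym fy).
by exists i; apply/existsP; exists x; apply/existsP; exists y; rewrite !eqxx.
Qed.

Lemma union_graph_simple : simple_graph union_graph.
Proof.
split=> [a | a b].
  apply/existsP => -[i /existsP[x /existsP[y /and3P[/eqP fx /eqP fy Fxy]]]].
  have Fxx : F i x x by apply: f_coherent Fxy; rewrite ?fx ?fy.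
  by case: (F_simple i) => /(_ x); rewrite Fxx.
suff sym a' b' : union_graph a' b' -> union_graph b' a' by apply/idP/idP; apply: sym.
case/existsP => i /existsP[x /existsP[y /and3P[fx fy Fxy]]].
apply/existsP; exists i; apply/existsP; exists y; apply/existsP; exists x.
by have [_ <-] := F_simple i; rewrite fx fy.
Qed.

Lemma induced_sub_union_graph i : injective (f i) -> induced_sub (F i) union_graph.
Proof. by move=> f_inj; exists (f i); split=> // x y; rewrite union_graphE. Qed.

End UnionGraph.

Definition relabel (B : finType) (u : rel B) : rel 'I_#|B| :=
  fun a b => u (enum_val a) (enum_val b).

Lemma relabel_simple (B : finType) (u : rel B) : simple_graph u -> simple_graph (relabel u).
Proof. by case=> irr sym; split=> [a | a b]; rewrite /relabel. Qed.

Lemma induced_sub_relabel (V B : finType) (g : rel V) (u : rel B) :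
  induced_sub g u -> induced_sub g (relabel u).
Proof.
case=> h [h_inj gE]; exists (enum_rank \o h); split=> [|x y].
  exact: inj_comp enum_rank_inj h_inj.
by rewrite /relabel /= !enum_rankK.
Qed.

Theorem theorem3 (s t k n p : nat) (F : 'I_t -> rel 'I_n) :
  t <= A s (2 * k - 2) k ->
  (forall i, simple_graph (F i)) ->
  (forall i, almost_equitably_colorable (F i) p k) ->
  exists m : nat,
    m <= s * ((n - p + (k - 1)) %/ k) + t * p /\
    exists U : rel 'I_m, induced_universal F U.
Proof.
move=> tA F_simple F_col; set c := (n - p + (k - 1)) %/ k.
have [w [w_weight w_dist]] := cw_code_family tA.
have /fin_all_exists[f f_place] i :
    exists f : 'I_n -> ('I_s * 'I_c) + ('I_t * 'I_p), column_placement (F i) (w i) i f.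
  by apply: column_placement_exists; rewrite ?card_ord.
have f_coherent := column_placements_coherent w_weight w_dist f_place.
exists #|{: ('I_s * 'I_c) + ('I_t * 'I_p)}|.
split; first by rewrite card_sum !card_prod !card_ord.
exists (relabel (union_graph F f)); split=> [|i].
  exact/relabel_simple/union_graph_simple.
by apply/induced_sub_relabel/induced_sub_union_graph => //; case: (f_place i).
Qed.
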